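(* Let $A\subset\mathbb{R}^d$ have positive reach $\tau_A$, let $\bar\tau\in(0,\tau_A]$, and let $\mathbb{X}\subset A$ be a finite point sample that is $\delta$-dense in $A$ with $\delta<\bar\tau/4$. Let $x\in\mathbb{X}$, $\epsilon\in(0,\tau_A)$, $q\in A$, and $p\in B_\epsilon(x)\cap\mathrm{UP}(A,q)$. If $q\notin B_\epsilon(x)$, then the sphere $\partial B_\epsilon(x)$ meets the line segment $\overline{qp}$ in a unique point $y$, and $\|y-q\|\le\epsilon^2/\tau_A$.
   Context: For closed $A\subset\mathbb{R}^d$: $\mathrm{UP}(A)$ is the set of points with a unique nearest point in $A$, $\xi_A$ maps each such point to it, $\mathrm{UP}(A,q)=\{z\in\mathrm{UP}(A):\xi_A(z)=q\}$, $\mathrm{Med}(A)=\mathbb{R}^d\setminus\mathrm{UP}(A)$, reach $\tau_A=\inf_{a\in A}d(a,\mathrm{Med}(A))$. $\mathbb{X}$ is $\delta$-dense in $A$ if every point of $A$ is at distance $<\delta$ from a point of $\mathbb{X}$. $B_\epsilon(x)$ is the open Euclidean ball and $\partial B_\epsilon(x)$ its boundary sphere. *)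

(* R : realType, points of R^d are row vectors 'rV[R]_d
   equipped with the EUCLIDEAN norm defined below. *)
From mathcomp Require Import all_boot all_order all_algebra.
From mathcomp Require Import all_classical all_reals all_analysis.
Set Implicit Arguments. Unset Strict Implicit. Unset Printing Implicit Defensive.
Import Order.TTheory GRing.Theory Num.Theory.
Local Open Scope classical_set_scope.
Local Open Scope ring_scope.

Section Defs.
Variables (R : realType) (d : nat).
Local Notation V := 'rV[R]_d.

Definition edot (u v : V) : R := \sum_(i < d) u ord0 i * v ord0 i.
Definition enorm (u : V) : R := Num.sqrt (edot u u).

Definition nearest (A : set V) (z q : V) : Prop :=
  A q /\ forall a, A a -> enorm (z - q) <= enorm (z - a).

Definition UP (A : set V) : set V :=
  [set z | exists q, nearest A z q /\ forall q', nearest A z q' -> q' = q].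

Definition UPq (A : set V) (q : V) : set V :=
  [set z | nearest A z q /\ forall q', nearest A z q' -> q' = q].

Definition Med (A : set V) : set V := ~` UP A.

(* distance from a point to a set, in the extended reals (+oo for the empty set) *)
Definition edist (z : V) (S : set V) : \bar R :=
  ereal_inf [set (enorm (z - s))%:E | s in S].

Definition reach (A : set V) : \bar R := ereal_inf [set edist a (Med A) | a in A].

Definition eball (x : V) (eps : R) : set V := [set z | enorm (z - x) < eps].
Definition esphere (x : V) (eps : R) : set V := [set z | enorm (z - x) = eps].

Definition segment (q p : V) : set V :=
  [set y | exists2 t : R, 0 <= t <= 1 & y = (1 - t) *: q + t *: p].

Definition eclosed (A : set V) : Prop :=
  forall z, (forall e : R, 0 < e -> exists2 a, A a & enorm (z - a) < e) -> A z.

Definition dense_in (X A : set V) (delta : R) : Prop :=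
  forall a, A a -> exists2 x, X x & enorm (a - x) < delta.

End Defs.

(* Let c_t be the point at distance t from q on the ray from q through p.  As q
   is the nearest point of A to p, Federer's argument shows that q stays a
   nearest point of A to c_t for every t < reach A: the set of such t is an
   interval containing its supremum T, and if T < reach A, maximising the
   distance to A over a small ball around c_T (where nearest points are unique
   and depend continuously on the point) produces a point of the ray beyond c_T
   that still projects to q.  With x in A this gives |c_t - x| >= t for all
   t < reach A.  Along the segment, s |-> |c_s - x|^2 is a monic quadratic that
   is >= eps^2 at s = 0 and < eps^2 at s = |p - q|, so it crosses eps^2 exactly
   once, at some s; comparing the two quadratic relations gives s t <= eps^2,
   whence |y - q| = s <= eps^2 / reach A. *)

From Pilot Require Import Defs.
From mathcomp Require Import all_boot all_order all_algebra.
From mathcomp Require Import all_classical all_reals all_analysis.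
From mathcomp Require Import ring lra.
Import Order.TTheory GRing.Theory Num.Theory.
Import numFieldNormedType.Exports.
Local Open Scope classical_set_scope.
Local Open Scope ring_scope.

Section EuclideanSpace.
Context {R : realType} {d : nat}.
Local Notation V := 'rV[R]_d.
Implicit Types (u v w : V).

Lemma edotC u v : edot u v = edot v u.
Proof. by apply: eq_bigr => i _; rewrite mulrC. Qed.

Lemma edotDl u v w : edot (u + v) w = edot u w + edot v w.
Proof. by rewrite /edot -big_split; apply: eq_bigr => i _; rewrite !mxE mulrDl. Qed.

Lemma edotDr u v w : edot w (u + v) = edot w u + edot w v.
Proof. by rewrite edotC edotDl !(edotC w). Qed.

Lemma edotZl (a : R) u v : edot (a *: u) v = a * edot u v.
Proof. by rewrite /edot mulr_sumr; apply: eq_bigr => i _; rewrite !mxE mulrA. Qed.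

Lemma edotZr (a : R) u v : edot v (a *: u) = a * edot v u.
Proof. by rewrite edotC edotZl edotC. Qed.

Lemma edotNl u v : edot (- u) v = - edot u v.
Proof. by rewrite -scaleN1r edotZl mulN1r. Qed.

Lemma edotNr u v : edot v (- u) = - edot v u.
Proof. by rewrite edotC edotNl edotC. Qed.

Lemma edotBl u v w : edot (u - v) w = edot u w - edot v w.
Proof. by rewrite edotDl edotNl. Qed.

Lemma edotBr u v w : edot w (u - v) = edot w u - edot w v.
Proof. by rewrite edotDr edotNr. Qed.

Lemma edot0l u : edot 0 u = 0.
Proof. by rewrite /edot big1 // => i _; rewrite mxE mul0r. Qed.

Lemma edot_ge0 u : 0 <= edot u u.
Proof. by apply: sumr_ge0 => i _; rewrite -expr2 sqr_ge0. Qed.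

Lemma edot_eq0 {u} : edot u u = 0 -> u = 0.
Proof.
move=> /eqP; rewrite psumr_eq0; last by move=> i _; rewrite -expr2 sqr_ge0.
move=> /allP u0; apply/rowP => i; rewrite mxE.
by have := u0 i (mem_index_enum i); rewrite implyTb mulf_eq0 orbb => /eqP.
Qed.

Lemma edotDD u v : edot (u + v) (u + v) = edot u u + 2 * edot u v + edot v v.
Proof. rewrite !(edotDl, edotDr) (edotC v u); ring. Qed.

Lemma enorm_ge0 u : 0 <= enorm u.
Proof. exact: sqrtr_ge0. Qed.

Lemma enorm_sqr u : enorm u ^+ 2 = edot u u.
Proof. by rewrite sqr_sqrtr // edot_ge0. Qed.

Lemma enorm0 : enorm (0 : V) = 0.
Proof. by rewrite /enorm edot0l sqrtr0. Qed.

Lemma enorm_eq0 {u} : enorm u = 0 -> u = 0.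
Proof. by move=> u0; apply: edot_eq0; rewrite -enorm_sqr u0 expr0n. Qed.

Lemma enorm_gt0 {u : V} : u != 0 -> 0 < enorm u.
Proof.
move=> u0; rewrite lt_neqAle enorm_ge0 andbT eq_sym.
by apply: contraNN u0 => /eqP /enorm_eq0 ->.
Qed.

Lemma enormZ (a : R) u : enorm (a *: u) = `|a| * enorm u.
Proof. by rewrite /enorm edotZl edotZr mulrA -expr2 sqrtrM ?sqr_ge0 // sqrtr_sqr. Qed.

Lemma enormN u : enorm (- u) = enorm u.
Proof. by rewrite /enorm edotNl edotNr opprK. Qed.

Lemma enorm_distC u v : enorm (u - v) = enorm (v - u).
Proof. by rewrite -enormN opprB. Qed.

Lemma enorm_le_sqr u (h : R) : 0 <= h -> (enorm u <= h) = (edot u u <= h ^+ 2).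
Proof. by move=> h0; rewrite -(ler_pXn2r (_ : 0 < 2)%N) ?nnegrE ?enorm_ge0 // enorm_sqr. Qed.

Lemma enorm_eq_sqr u (h : R) : 0 <= h -> (enorm u = h) <-> (edot u u = h ^+ 2).
Proof.
move=> h0; split => [<-|uh]; first by rewrite enorm_sqr.
by rewrite /enorm uh sqrtr_sqr ger0_norm.
Qed.

Lemma edot_le_enorm u v : edot u v <= enorm u * enorm v.
Proof.
suff CS : edot u v ^+ 2 <= edot u u * edot v v.
  rewrite /enorm -sqrtrM ?edot_ge0 //; apply: le_trans (ler_norm _) _.
  by rewrite -sqrtr_sqr ler_sqrt // mulr_ge0 // edot_ge0.
have [v0|vpos] := eqVneq (edot v v) 0.
  by rewrite (edot_eq0 v0) edotC !edot0l expr0n mulr0.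
have := edot_ge0 (edot v v *: u - edot u v *: v).
rewrite !(edotBl, edotBr, edotZl, edotZr) (edotC v u) => h.
have : 0 <= edot v v * (edot u u * edot v v - edot u v ^+ 2) by nra.
by rewrite pmulr_rge0 ?subr_ge0 // lt_neqAle eq_sym vpos edot_ge0.
Qed.

Lemma ler_enormD u v : enorm (u + v) <= enorm u + enorm v.
Proof.
rewrite enorm_le_sqr ?addr_ge0 ?enorm_ge0 // edotDD sqrrD !enorm_sqr.
by have := edot_le_enorm u v; lra.
Qed.

Lemma ler_enorm_distD u v w : enorm (u - w) <= enorm (u - v) + enorm (v - w).
Proof. by have := ler_enormD (u - v) (v - w); rewrite addrA subrK. Qed.

Lemma enorm_convex_step (n nu : V) (e h : R) :
  enorm n = 1 -> enorm nu <= 1 -> 0 <= e <= h -> enorm (h *: nu + e *: (n - nu)) <= h.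
Proof.
move=> n1 nu1 /andP [e0 eh].
have -> : h *: nu + e *: (n - nu) = (h - e) *: nu + e *: n.
  by apply/rowP => i; rewrite !mxE; ring.
apply: le_trans (ler_enormD _ _) _.
rewrite !enormZ !ger0_norm ?subr_ge0 // n1.
have : (h - e) * enorm nu <= h - e by rewrite ler_piMr ?subr_ge0.
lra.
Qed.

Lemma edot_sub_unit {n nu : V} :
  enorm n = 1 -> enorm nu <= 1 -> edot (n - nu) (n - nu) <= 2 * edot (n - nu) n.
Proof.
move=> n1 nu1.
have nn : edot n n = 1 by rewrite -enorm_sqr n1 expr1n.
have : edot nu nu <= 1 ^+ 2 by rewrite -enorm_le_sqr.
rewrite expr1n !(edotBl, edotBr) (edotC nu n) nn; lra.
Qed.

Lemma edot_lt0_of_enorm_le {u v : V} {e : R} :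
  0 < e -> v != 0 -> enorm (u + e *: v) <= enorm u -> edot u v < 0.
Proof.
move=> e0 v0; rewrite enorm_le_sqr ?enorm_ge0 // enorm_sqr edotDD !(edotZl, edotZr).
have vv : 0 < edot v v by rewrite -enorm_sqr exprn_gt0 // enorm_gt0.
have evv : 0 < e * (e * edot v v) by rewrite !mulr_gt0.
move=> h; have : e * (2 * edot u v) < 0 by lra.
by rewrite pmulr_rlt0 // pmulr_rlt0.
Qed.

End EuclideanSpace.

Section Topology.
Context {R : realType} {d : nat}.
Local Notation V := 'rV[R]_d.
Implicit Types (u v w : V).

(* [`|u|] is the sup norm, which carries the topology of ['rV[R]_d]. *)
Lemma ler_mxnorm_enorm u : `|u| <= enorm u.
Proof.
rewrite [leLHS]/Num.norm /= mx_normrE.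
apply: bigmax_le => [|ij _]; first exact: enorm_ge0.
rewrite (ord1 ij.1) -sqrtr_sqr /enorm ler_sqrt ?edot_ge0 //.
rewrite /edot (bigD1 ij.2) //= -expr2 lerDl.
by apply: sumr_ge0 => j _; rewrite -expr2 sqr_ge0.
Qed.

Lemma ler_enorm_mxnorm u : enorm u <= d%:R * `|u|.
Proof.
rewrite enorm_le_sqr ?mulr_ge0 //.
have coord i : `|u ord0 i| <= `|u|.
  rewrite [leRHS]/Num.norm /= mx_normrE.
  exact: (le_bigmax _ (fun ij : 'I_1 * 'I_d => `|u ij.1 ij.2|) (ord0, i)).
apply: (@le_trans _ _ (\sum_(i < d) `|u| ^+ 2)).
  apply: ler_sum => i _; rewrite -expr2 -real_normK ?num_real //.
  by rewrite lerXn2r ?nnegrE ?normr_ge0 ?coord.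
rewrite sumr_const card_ord -[_ *+ d]mulr_natl exprMn ler_wpM2r ?sqr_ge0 // expr2.
by case: d => [|n]; rewrite ?mul0r // ler_peMl // ler1n.
Qed.

Lemma lipschitz_continuous (f : V -> R) (k : R) : 0 <= k ->
  (forall u v, `|f u - f v| <= k * enorm (u - v)) -> continuous f.
Proof.
move=> k0 fk x; apply/(@cvgrPdist_lt _ _ _ (nbhs x) (nbhs_filter x)) => e e0.
have kd0 : 0 < k * d%:R + 1 by rewrite ltr_pwDr // mulr_ge0.
have : \forall y \near x, `|x - y| < e / (k * d%:R + 1).
  apply: (@fcvgrPdist_lt R V (nbhs x) (nbhs_filter x) x).1; last exact: divr_gt0.
  exact: cvg_id.
apply: filterS => y xy; apply: (le_lt_trans (fk x y)).
apply: (le_lt_trans (ler_wpM2l k0 (ler_enorm_mxnorm _))).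
rewrite mulrA; apply: (@le_lt_trans _ _ (k * d%:R * (e / (k * d%:R + 1)))).
  by rewrite ler_wpM2l ?mulr_ge0 // ltW.
by rewrite mulrA ltr_pdivrMr // mulrC ltr_pM2l // ltrDl.
Qed.

Lemma continuous_enorm_dist w : continuous (fun y : V => enorm (w - y)).
Proof.
apply: (@lipschitz_continuous _ 1) => // u v; rewrite mul1r ler_norml.
have := ler_enorm_distD w v u; have := ler_enorm_distD w u v.
by rewrite (enorm_distC v u); lra.
Qed.

Lemma near_enorm_dist (z : V) (e : R) : 0 < e -> \forall y \near z, enorm (z - y) < e.
Proof.
move=> e0; have /cvgrPdist_lt/(_ e e0) := continuous_enorm_dist z z.
by apply: filterS => y; rewrite subrr enorm0 sub0r normrN ger0_norm ?enorm_ge0.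
Qed.

Lemma eclosed_closed (S : set V) : eclosed S -> closed S.
Proof.
move=> cS z zS; apply: cS => e e0.
by have [y [Sy zy]] := zS _ (near_enorm_dist z e e0); exists y.
Qed.

Lemma compact_enorm_ball (c : V) (h : R) : compact [set y | enorm (c - y) <= h].
Proof.
apply: bounded_closed_compact; last first.
  exact: (continuous_closedP _).1 (continuous_enorm_dist c) _ (@closed_le R h).
rewrite /bounded_set /= /bounded_near; near=> M => y /= cy.
apply: le_trans (ler_mxnorm_enorm y) _.
have := ler_enorm_distD y c 0; rewrite !subr0 enorm_distC => yc.
apply: (@le_trans _ _ (enorm c + h)); first lra.
near: M; apply: nbhs_pinfty_ge; exact: num_real.
Unshelve. all: by end_near.
Qed.

End Topology.

Section DistanceToASet.
Context {R : realType} {d : nat}.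
Local Notation V := 'rV[R]_d.
Implicit Types (A : set V).

(* Real-valued counterpart of [edist]; junk ([inf set0]) for empty [A]. *)
Definition dist_to A (y : V) : R := inf [set enorm (y - a) | a in A].

Lemma dist_to_le {A} (y : V) {a : V} : A a -> dist_to A y <= enorm (y - a).
Proof.
move=> Aa; apply: ge_inf; last by exists a.
by exists 0 => _ [b _ <-]; exact: enorm_ge0.
Qed.

Lemma dist_to_ge A (y : V) (c : R) :
  A !=set0 -> (forall a, A a -> c <= enorm (y - a)) -> c <= dist_to A y.
Proof.
move=> [a0 Aa0] yc; apply: lb_le_inf; first by exists (enorm (y - a0)), a0.
by move=> _ [b Ab <-]; exact: yc.
Qed.

Lemma nearest_dist_to {A} {y w : V} : nearest A y w -> dist_to A y = enorm (y - w).
Proof.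
move=> [Aw yw]; apply/eqP; rewrite eq_le dist_to_le //=.
by apply: dist_to_ge => //; exists w.
Qed.

Lemma continuous_dist_to {A} : A !=set0 -> continuous (dist_to A).
Proof.
move=> A0; apply: (@lipschitz_continuous _ _ _ 1) => // u v; rewrite mul1r ler_norml.
have dist_to_lip (y z : V) : dist_to A y <= dist_to A z + enorm (y - z).
  rewrite -lerBlDr; apply: dist_to_ge => // a Aa; rewrite lerBlDr.
  apply: le_trans (dist_to_le y Aa) _.
  by have := ler_enorm_distD y z a; lra.
have := dist_to_lip u v; have := dist_to_lip v u; rewrite (enorm_distC v u).
by move=> ? ?; apply/andP; split; lra.
Qed.

Lemma UP_of_lt_reach {A} {a z : V} : A a -> ((enorm (z - a))%:E < reach A)%E -> UP A z.
Proof.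
move=> Aa za; apply: contrapT => zMed.
have aMed : (Defs.edist a (Med A) <= (enorm (a - z))%:E)%E.
  by apply: ereal_inf_lbound; exists z.
have reach_a : (reach A <= Defs.edist a (Med A))%E by apply: ereal_inf_lbound; exists a.
by have := lt_le_trans za (le_trans reach_a aMed); rewrite enorm_distC ltxx.
Qed.

Lemma unique_nearest_stable {A} {y w : V} {eta : R} :
  eclosed A -> nearest A y w -> (forall w', nearest A y w' -> w' = w) -> 0 < eta ->
  exists2 k : R, 0 < k & forall a, A a ->
    enorm (y - a) < enorm (y - w) + k -> enorm (w - a) < eta.
Proof.
move=> cA [Aw yw] uw eta0; set del := enorm (y - w).
(* The points of A at distance >= eta from w have a closest one to y, which by
   uniqueness of w is strictly farther from y than w. *)
pose K := [set a | enorm (y - a) <= del + 1] `&` (A `&` [set a | eta <= enorm (w - a)]).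
have [[a0 Ka0]|K0] := pselect (K !=set0); last first.
  exists 1 => // a Aa ya; rewrite ltNge; apply/negP => wa.
  by apply: K0; exists a; split; [rewrite /= ltW|].
have cK : compact K.
  apply: compact_closedI; first exact: compact_enorm_ball.
  apply: closedI; first exact: eclosed_closed.
  exact: (continuous_closedP _).1 (continuous_enorm_dist w) _ (@closed_ge R eta).
have [a1 a1K a1min] := EVT_min_rV (ex_intro _ a0 Ka0) cK
  (continuous_subspaceT (continuous_enorm_dist y)).
rewrite in_setE in a1K; case: a1K => [/= ya1 [Aa1 /= wa1]].
have del_lt : del < enorm (y - a1).
  rewrite lt_neqAle yw // andbT; apply/negP => /eqP ya1_del.
  have a1w : a1 = w by apply: uw; split => // a Aa; rewrite -ya1_del yw.
  by move: wa1; rewrite a1w subrr enorm0 leNgt eta0.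
exists (Num.min 1 (enorm (y - a1) - del)); first by rewrite lt_min ltr01 subr_gt0.
move=> a Aa ya; rewrite ltNge; apply/negP => wa.
have Ka : K a.
  split; last by split.
  by apply: ltW; apply: (lt_le_trans ya); rewrite lerD2l ge_min lexx.
have := a1min a; rewrite in_setE => /(_ Ka); apply/negP; rewrite -ltNge.
by apply: (lt_le_trans ya); rewrite -lerBrDl ge_min lexx orbT.
Qed.

End DistanceToASet.

Section NormalRay.
Context {R : realType} {d : nat}.
Local Notation V := 'rV[R]_d.
Implicit Types (A : set V).

Lemma nearest_move_away {A} {y w v : V} :
  eclosed A -> nearest A y w -> (forall w', nearest A y w' -> w' = w) ->
  0 < edot (y - w) v ->
  exists2 e0 : R, 0 < e0 & forall (e : R) we, 0 < e <= e0 ->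
    nearest A (y + e *: v) we -> enorm (y - w) < enorm (y + e *: v - we).
Proof.
move=> cA nyw uw acute; have [Aw yw] := nyw.
(* Nearest points of y + e v are close to w, so the first-order gain
   <y - w, v> e cannot be cancelled. *)
have vn0 : v != 0 by apply: contraTneq acute => ->; rewrite edotC edot0l ltxx.
have v0 : 0 < enorm v := enorm_gt0 vn0.
have eta0 : 0 < edot (y - w) v / enorm v by rewrite divr_gt0.
have [k k0 hk] := unique_nearest_stable cA nyw uw eta0.
exists (k / (2 * enorm v)); first by rewrite divr_gt0 // mulr_gt0.
move=> e we /andP [e0 ek] [Awe ywe]; rewrite ltNge; apply/negP => ye_we.
have y_we : edot (y - we) v < 0.
  apply: (edot_lt0_of_enorm_le e0 vn0); apply: le_trans (yw we Awe).
  by rewrite addrAC.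
have far : edot (y - w) v / enorm v < enorm (w - we).
  rewrite ltr_pdivrMr // enorm_distC; apply: lt_le_trans (edot_le_enorm _ _).
  rewrite (_ : we - w = (y - w) - (y - we)); last by apply/rowP => i; rewrite !mxE; ring.
  by rewrite (edotBl (y - w)); lra.
have ev : e * enorm v <= k / 2.
  by move: ek; rewrite ler_pdivlMr ?mulr_gt0 //; lra.
have near : enorm (y - we) < enorm (y - w) + k.
  have := ler_enormD (y + e *: v - we) (- (e *: v)).
  rewrite addrAC addrK enormN enormZ ger0_norm ?(ltW e0) //; lra.
by have := hk we Awe near; rewrite ltNge (ltW far).
Qed.

Lemma argmax_dist_to_ball {A} {c ys w : V} {h : R} :
  eclosed A -> 0 < h -> enorm (c - ys) <= h ->
  (forall y, enorm (c - y) <= h -> dist_to A y <= dist_to A ys) ->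
  (forall y, enorm (c - y) <= h -> exists w', nearest A y w') ->
  nearest A ys w -> (forall w', nearest A ys w' -> w' = w) -> 0 < enorm (ys - w) ->
  (enorm (ys - w))^-1 *: (ys - w) = h^-1 *: (ys - c).
Proof.
move=> cA h0 cys ysmax hnear nysw uw del0; set del := enorm (ys - w).
set n := del^-1 *: (ys - w); set nu := h^-1 *: (ys - c).
apply/eqP; rewrite -subr_eq0; apply/negPn/negP => vn0; set v := n - nu in vn0.
have n1 : enorm n = 1 by rewrite enormZ ger0_norm ?invr_ge0 ?(ltW del0) // mulVf ?gt_eqF.
have nu1 : enorm nu <= 1.
  by rewrite enormZ ger0_norm ?invr_ge0 ?(ltW h0) // ler_pdivrMl // mulr1 enorm_distC.
have acute : 0 < edot (ys - w) v.
  have ysw_n : ys - w = del *: n by rewrite /n scalerA mulfV ?gt_eqF ?scale1r.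
  have : 0 < edot v v by rewrite -enorm_sqr exprn_gt0 // enorm_gt0.
  rewrite ysw_n edotZl edotC pmulr_rgt0 //; have := edot_sub_unit n1 nu1; lra.
(* Moving ys along v stays in the ball but increases the distance to A. *)
have [e0 e00 move_away] := nearest_move_away cA nysw uw acute.
pose e := Num.min h e0.
have e_h : 0 <= e <= h by rewrite /e le_min (ltW h0) (ltW e00) ge_min lexx.
have e0e : 0 < e <= e0 by rewrite /e lt_min h0 e00 ge_min lexx orbT.
have yeB : enorm (c - (ys + e *: v)) <= h.
  have -> : c - (ys + e *: v) = - (h *: nu + e *: v).
    rewrite /nu scalerA mulfV ?gt_eqF // scale1r.
    by apply/rowP => i; rewrite !mxE; ring.
  by rewrite enormN; apply: enorm_convex_step.
have [we nwe] := hnear _ yeB.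
have := move_away e we e0e nwe; have := ysmax _ yeB.
by rewrite (nearest_dist_to nwe) (nearest_dist_to nysw) -/del; lra.
Qed.

Lemma nearest_shift_toward A (y w : V) (s : R) :
  nearest A y w -> 0 <= s <= 1 -> nearest A (y - s *: (y - w)) w.
Proof.
move=> [Aw yw] /andP [s0 s1]; split=> // a Aa.
have yc : y - (y - s *: (y - w)) = s *: (y - w) by apply/rowP => i; rewrite !mxE; ring.
have cw : y - s *: (y - w) - w = (1 - s) *: (y - w) by apply/rowP => i; rewrite !mxE; ring.
have := ler_enorm_distD y (y - s *: (y - w)) a; have := yw a Aa.
by rewrite cw yc !enormZ !ger0_norm ?subr_ge0 // mulrBl mul1r; lra.
Qed.

Lemma ray_extend {A} {q c : V} {T h : R} :
  eclosed A -> 0 < h <= T -> nearest A c q -> enorm (c - q) = T ->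
  (forall z, enorm (c - z) <= h -> UP A z) ->
  forall a, A a -> T + h <= enorm (c + (h / T) *: (c - q) - a).
Proof.
move=> cA /andP [h0 hT] ncq cq hUP; have [Aq _] := ncq.
have A0 : A !=set0 by exists q.
have T0 : 0 < T by apply: lt_le_trans hT.
have Bc : [set y | enorm (c - y) <= h] c by rewrite /= subrr enorm0 ltW.
(* The maximiser ys of the distance to A on the ball lies beyond c on the ray
   from its nearest point w through c; hence w is nearest to c too, so w = q. *)
have [ys ysB ysmax] := EVT_max_rV (ex_intro _ c Bc) (compact_enorm_ball c h)
  (continuous_subspaceT (continuous_dist_to A0)).
rewrite in_setE /= in ysB.
have [w [ysw uw]] := hUP ys ysB.
have del_ge : T <= enorm (ys - w).
  rewrite -(nearest_dist_to ysw) -cq -(nearest_dist_to ncq).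
  by apply: ysmax; rewrite in_setE /= subrr enorm0 ltW.
have del0 : 0 < enorm (ys - w) by apply: lt_le_trans del_ge.
have align : (enorm (ys - w))^-1 *: (ys - w) = h^-1 *: (ys - c).
  apply: argmax_dist_to_ball cA h0 ysB _ _ ysw uw del0 => [y cy|y cy].
    by apply: ysmax; rewrite in_setE.
  by have [w' [nw' _]] := hUP y cy; exists w'.
set del := enorm (ys - w) in del_ge del0 align; set s := h / del.
have s01 : 0 <= s <= 1.
  by rewrite /s divr_ge0 ?(ltW h0) ?(ltW del0) //= ler_pdivrMr // mul1r; lra.
have c_ys : c = ys - s *: (ys - w).
  by rewrite -scalerA align scalerA mulfV ?gt_eqF // scale1r opprB addrC subrK.
have ncw : nearest A c w by rewrite c_ys; apply: nearest_shift_toward.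
have wq : w = q.
  have [q' [_ uq']] := hUP c Bc.
  by rewrite (uq' _ ncw) (uq' _ ncq).
have cw : c - w = (del - h) / del *: (ys - w).
  by rewrite c_ys /s; apply/rowP => i; rewrite !mxE; field; rewrite gt_eqF.
have Tdel : T = del - h.
  by rewrite -cq -wq cw enormZ ger0_norm ?divr_ge0 ?subr_ge0 -?/del ?divfK ?gt_eqF //; lra.
move=> a Aa.
have -> : c + (h / T) *: (c - q) = ys.
  by rewrite -wq cw scalerA Tdel mulrA divfK -?Tdel ?gt_eqF // c_ys subrK.
by rewrite Tdel subrK; apply: ysw.2.
Qed.

Lemma continuity_induction (P : R -> Prop) (r t0 : R) :
  0 < r -> P r -> 0 <= t0 ->
  (forall t1 t2, P t1 -> 0 <= t2 <= t1 -> P t2) ->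
  (forall T, 0 < T -> (forall t, 0 <= t < T -> P t) -> P T) ->
  (forall T, 0 < T <= t0 -> P T -> exists2 h, 0 < h & P (T + h)) ->
  P t0.
Proof.
move=> r0 Pr t00 Pdown Pclosed Pext; apply: contrapT => nPt0.
pose S := [set t | 0 <= t /\ P t].
have S_ub t : S t -> t <= t0.
  move=> [t_ge0 Pt]; rewrite leNgt; apply/negP => t0t; apply: nPt0.
  by apply: Pdown Pt _; rewrite t00 ltW.
have Sr : S r by split; first exact: ltW.
have hS : has_sup S by split; [exists r | exists t0 => t /S_ub].
have rT : r <= sup S by apply: sup_upper_bound.
have T0 : 0 < sup S by apply: lt_le_trans rT.
have Tt0 : sup S <= t0 by apply: ge_sup; [exists r | move=> t /S_ub].
have below t : 0 <= t < sup S -> P t.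
  move=> /andP [t_ge0 tT]; have tT0 : 0 < sup S - t by rewrite subr_gt0.
  have [s [_ Ps] ts] := sup_adherent tT0 hS.
  by apply: Pdown Ps _; rewrite t_ge0 /=; lra.
have [h h0 PTh] := Pext (sup S) (introT andP (conj T0 Tt0)) (Pclosed _ T0 below).
have : sup S + h <= sup S by apply: sup_upper_bound => //; split; [lra|].
lra.
Qed.

Definition ray_point (q p : V) (t : R) : V := q + (t / enorm (p - q)) *: (p - q).

Lemma ray_pointB (q p : V) (t1 t2 : R) : p != q ->
  enorm (ray_point q p t1 - ray_point q p t2) = `|t1 - t2|.
Proof.
rewrite -subr_eq0 => /enorm_gt0 pq0.
rewrite /ray_point opprD addrACA subrr add0r -scalerBl enormZ -mulrBl normrM.
by rewrite (ger0_norm (_ : 0 <= _^-1)) ?invr_ge0 ?(ltW pq0) // divfK ?gt_eqF.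
Qed.

Lemma ray_point0 (q p : V) : ray_point q p 0 = q.
Proof. by rewrite /ray_point mul0r scale0r addr0. Qed.

Lemma ray_point_end (q p : V) : p != q -> ray_point q p (enorm (p - q)) = p.
Proof.
rewrite -subr_eq0 => /enorm_gt0 pq0.
by rewrite /ray_point mulfV ?gt_eqF // scale1r addrCA subrr addr0.
Qed.

Lemma ray_point_dist (q p : V) (t : R) : p != q -> 0 <= t -> enorm (ray_point q p t - q) = t.
Proof. by move=> pq t0; rewrite -{2}(ray_point0 q p) ray_pointB // subr0 ger0_norm. Qed.

Lemma nearest_along_ray {A} {q p : V} {t : R} : eclosed A -> p != q -> nearest A p q ->
  0 <= t -> (t%:E < reach A)%E -> nearest A (ray_point q p t) q.
Proof.
move=> cA pq [Aq pqA] t0 t_reach.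
have pq0 : 0 < enorm (p - q) by apply: enorm_gt0; rewrite subr_eq0.
pose P t := forall a, A a -> t <= enorm (ray_point q p t - a).
suff Pt : P t by split=> // a Aa; rewrite ray_point_dist //; apply: Pt.
have ray_dist t1 t2 a : enorm (ray_point q p t1 - a) <=
    `|t1 - t2| + enorm (ray_point q p t2 - a).
  by rewrite -(ray_pointB _ _ _ _ pq); apply: ler_enorm_distD.
apply: (@continuity_induction P (enorm (p - q))) => //.
- by rewrite /P ray_point_end.
- move=> t1 t2 Pt1 /andP [t2_ge0 t21] a Aa.
  have := ray_dist t1 t2 a; have := Pt1 a Aa.
  by rewrite ger0_norm ?subr_ge0 //; lra.
- move=> T T0 below a Aa; rewrite leNgt; apply/negP => Ta.
  set x := enorm (ray_point q p T - a) in Ta.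
  have x0 : 0 <= x by apply: enorm_ge0.
  have := ray_dist ((3 * T + x) / 4) T a.
  have := below ((3 * T + x) / 4) ltac:(apply/andP; split; lra) a Aa.
  by rewrite ler0_norm -/x; lra.
move=> T /andP [T0 Tt] PT.
have [rho rho0 rho_reach] : exists2 rho : R, 0 < rho & ((T + rho)%:E < reach A)%E.
  move: t_reach; case: (reach A) => [tau||] //= t_tau; last by exists 1 => //; apply: ltry.
  by rewrite lte_fin in t_tau; exists ((tau - T) / 2); rewrite ?lte_fin; lra.
pose h := Num.min T rho.
have hT : 0 < h <= T by rewrite /h lt_min T0 rho0 ge_min lexx.
have hrho : h <= rho by rewrite /h ge_min lexx orbT.
have hUP z : enorm (ray_point q p T - z) <= h -> UP A z.
  move=> cz; apply: (UP_of_lt_reach Aq); apply: le_lt_trans rho_reach; rewrite lee_fin.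
  have := ler_enorm_distD z (ray_point q p T) q.
  by rewrite (enorm_distC z (ray_point q p T)) ray_point_dist ?(ltW T0) //; lra.
have ncq : nearest A (ray_point q p T) q.
  by split=> // a Aa; rewrite ray_point_dist ?(ltW T0) //; apply: PT.
have Th := ray_extend cA hT ncq (ray_point_dist _ _ _ pq (ltW T0)) hUP.
exists h; first by case/andP: hT.
move=> a Aa.
have <- : ray_point q p T + (h / T) *: (ray_point q p T - q) = ray_point q p (T + h).
  by apply/rowP => i; rewrite !mxE; field; rewrite !gt_eqF.
exact: Th.
Qed.

End NormalRay.

Section RealInequalities.
Context {R : realType}.

Lemma quadratic_root_unique (b c r s1 s2 : R) : s1 <= r -> s2 <= r ->
  c + 2 * s1 * b + s1 ^+ 2 = 0 -> c + 2 * s2 * b + s2 ^+ 2 = 0 ->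
  c + 2 * r * b + r ^+ 2 < 0 -> s1 = s2.
Proof.
move=> s1r s2r e1 e2 neg; have [//|ne] := eqVneq s1 s2; exfalso.
have : (s1 - s2) * (s1 + s2 + 2 * b) = (c + 2 * s1 * b + s1 ^+ 2) - (c + 2 * s2 * b + s2 ^+ 2).
  by ring.
(* distinct roots have sum -2b and product c, so the value at r is
   (r - s1) (r - s2) >= 0 *)
rewrite e1 e2 subrr => /eqP; rewrite mulf_eq0 subr_eq0 (negbTE ne) /= => /eqP sum0.
have : 0 <= (r - s1) * (r - s2) by rewrite mulr_ge0 // subr_ge0.
nra.
Qed.

Lemma chord_bound {D B s tau eps : R} : eps ^+ 2 <= D -> 0 <= s < eps -> 0 < tau ->
  0 <= D + 2 * tau * B -> D + 2 * s * B + s ^+ 2 = eps ^+ 2 -> s * tau <= eps ^+ 2.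
Proof.
move=> epsD /andP [s0 s_eps] tau0 far on_sphere.
have [s_tau|tau_s] := leP s tau; last by nra.
(* tau eps^2 = tau D + 2 s tau B + tau s^2 >= (tau - s) D + tau s^2
             >= (tau - s) eps^2 + tau s^2 *)
have : s * (tau * s) <= s * eps ^+ 2.
  have Deps : (tau - s) * eps ^+ 2 <= (tau - s) * D by rewrite ler_wpM2l ?subr_ge0.
  have sfar : 0 <= s * (D + 2 * tau * B) by rewrite mulr_ge0.
  have /= tau_sphere := congr1 (fun z => tau * z) on_sphere.
  nra.
have [->|s_gt0] := eqVneq s 0; first by rewrite !mul0r sqr_ge0.
by rewrite ler_pM2l ?lt_neqAle 1?eq_sym ?s_gt0 // mulrC.
Qed.

Lemma lee_div_of_forall_lt (r : \bar R) (s c : R) : (0 < r)%E -> 0 <= s -> 0 < c ->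
  (forall tau, 0 < tau -> (tau%:E < r)%E -> s * tau <= c) -> (s%:E <= c%:E / r)%E.
Proof.
case: r => [r||] // r0 s0 c0 sc; last first.
  rewrite invey mule0 lee_fin leNgt; apply/negP => s_gt0.
  have tau0 : 0 < 2 * c / s by rewrite divr_gt0 // mulr_gt0.
  have := sc _ tau0 (ltry _).
  by rewrite mulrCA divff ?gt_eqF // mulr1; lra.
rewrite lte_fin in r0; rewrite inver gt_eqF // -EFinM lee_fin ler_pdivlMr //.
rewrite leNgt; apply/negP => c_lt.
have s_gt0 : 0 < s.
  rewrite lt_neqAle s0 andbT eq_sym; apply: contraTneq c_lt => ->.
  by rewrite mul0r -leNgt ltW.
pose tau := (r + c / s) / 2.
have c_s : c / s < r by rewrite ltr_pdivrMr // mulrC.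
have tau0 : 0 < tau by rewrite divr_gt0 // addr_gt0 // divr_gt0.
have tau_r : (tau%:E < r%:E)%E by rewrite lte_fin /tau; lra.
have := sc _ tau0 tau_r.
have : c < s * tau by rewrite -ltr_pdivrMl // mulrC /tau; lra.
lra.
Qed.

End RealInequalities.

Section SegmentAndSphere.
Context {R : realType} {d : nat}.
Local Notation V := 'rV[R]_d.

Lemma segment_ray_point (q p y : V) : p != q ->
  segment q p y <-> exists2 s, 0 <= s <= enorm (p - q) & y = ray_point q p s.
Proof.
rewrite -subr_eq0 => /enorm_gt0 r0; split.
  move=> [t /andP [t0 t1] ->]; exists (t * enorm (p - q)).
    by rewrite mulr_ge0 ?(ltW r0) //= ler_piMl ?(ltW r0).
  by rewrite /ray_point; apply/rowP => i; rewrite !mxE; field; rewrite gt_eqF.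
move=> [s /andP [s0 sr] ->]; exists (s / enorm (p - q)).
  by rewrite divr_ge0 ?(ltW r0) //= ler_pdivrMr // mul1r.
by rewrite /ray_point; apply/rowP => i; rewrite !mxE; ring.
Qed.

Lemma ray_point_dist_sqr (q p x : V) (s : R) : p != q ->
  edot (ray_point q p s - x) (ray_point q p s - x) =
  edot (q - x) (q - x) + 2 * s * (edot (q - x) (p - q) / enorm (p - q)) + s ^+ 2.
Proof.
rewrite -subr_eq0 => /enorm_gt0 r0.
rewrite /ray_point addrAC (edotDD (q - x)) !(edotZl, edotZr) -(enorm_sqr (p - q)).
by field; rewrite gt_eqF.
Qed.

Lemma segment_sphere_crossing (x q p : V) (eps : R) :
  0 < eps -> eps <= enorm (q - x) -> enorm (p - x) < eps ->
  exists! y, esphere x eps y /\ segment q p y.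
Proof.
move=> eps0 qx px.
have pq : p != q by apply: contraTneq px => ->; rewrite -leNgt.
set r := enorm (p - q); set D := edot (q - x) (q - x).
set B := edot (q - x) (p - q) / r.
pose P : {poly R} := 'X^2 + (2 * B) *: 'X + D%:P.
have Pform s : P.[s] = D + 2 * s * B + s ^+ 2.
  by rewrite !(hornerD, hornerZ, hornerXn, hornerX, hornerC); ring.
have on_sphere s : esphere x eps (ray_point q p s) <-> P.[s] = eps ^+ 2.
  by rewrite Pform -ray_point_dist_sqr //; apply: enorm_eq_sqr; apply: ltW.
have P0 : eps ^+ 2 <= P.[0].
  rewrite Pform -ray_point_dist_sqr // ray_point0 -enorm_sqr.
  by rewrite ler_pXn2r ?nnegrE ?enorm_ge0 ?(ltW eps0).
have Pr : P.[r] < eps ^+ 2.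
  rewrite Pform -ray_point_dist_sqr // ray_point_end // -enorm_sqr.
  by rewrite ltr_pXn2r ?nnegrE ?enorm_ge0 ?(ltW eps0).
have root s : P.[s] = eps ^+ 2 -> (D - eps ^+ 2) + 2 * s * B + s ^+ 2 = 0.
  by rewrite Pform => Ps; rewrite -Ps; ring.
have [s sr Ps] : exists2 s, s \in `[0, r] & P.[s] = eps ^+ 2.
  apply: IVT; first exact: enorm_ge0.
    exact: continuous_subspaceT (@continuous_horner _ P).
  by rewrite ge_min le_max (ltW Pr) P0 orbT.
rewrite in_itv /= in sr.
exists (ray_point q p s); split.
  by split; [apply/on_sphere | apply/segment_ray_point => //; exists s].
move=> y [/[swap] /(segment_ray_point _ _ _ pq) [s' /andP [_ s'r] ->] /on_sphere Ps'].
congr (ray_point q p _); apply: (@quadratic_root_unique _ B (D - eps ^+ 2) r).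
- by case/andP: sr.
- by [].
- exact: root.
- exact: root.
- by move: Pr; rewrite Pform; lra.
Qed.

Lemma segment_sphere_dist_bound (A : set V) (x q p y : V) (eps : R) :
  eclosed A -> (0 < reach A)%E -> A x -> nearest A p q -> p != q -> 0 < eps ->
  eps <= enorm (q - x) -> enorm (p - x) < eps ->
  esphere x eps y -> segment q p y -> ((enorm (y - q))%:E <= (eps ^+ 2)%:E / reach A)%E.
Proof.
move=> cA reach0 Ax npq pq eps0 qx px y_sph /(segment_ray_point _ _ _ pq) [s /andP [s0 sr] ys].
have r_eps : enorm (p - q) < eps by apply: le_lt_trans (npq.2 x Ax) px.
rewrite ys ray_point_dist //.
apply: lee_div_of_forall_lt => // [|tau tau0 tau_reach]; first exact: exprn_gt0.
have far : tau ^+ 2 <= edot (ray_point q p tau - x) (ray_point q p tau - x).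
  rewrite -enorm_sqr ler_pXn2r ?nnegrE ?enorm_ge0 ?(ltW tau0) //.
  rewrite -{1}(ray_point_dist q p tau pq (ltW tau0)).
  exact: (nearest_along_ray cA pq npq (ltW tau0) tau_reach).2.
have on_sphere := (enorm_eq_sqr _ _ (ltW eps0)).1 y_sph.
rewrite ys !ray_point_dist_sqr // in far on_sphere.
apply: (chord_bound _ _ tau0 _ on_sphere).
- by rewrite -enorm_sqr ler_pXn2r ?nnegrE ?enorm_ge0 ?(ltW eps0).
- by rewrite s0 (le_lt_trans sr).
- lra.
Qed.

End SegmentAndSphere.

Theorem mainTheorem15 (R : realType) (d : nat) (A X : set 'rV[R]_d)
  (taubar delta eps : R) (x q p : 'rV[R]_d) :
  eclosed A ->
  (0 < reach A)%E ->
  0 < taubar -> (taubar%:E <= reach A)%E ->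
  finite_set X -> X `<=` A -> dense_in X A delta -> delta < taubar / 4 ->
  X x ->
  0 < eps -> (eps%:E < reach A)%E ->
  A q ->
  eball x eps p -> UPq A q p ->
  ~ eball x eps q ->
  (exists! y, esphere x eps y /\ segment q p y) /\
  (forall y, esphere x eps y -> segment q p y ->
     ((enorm (y - q))%:E <= (eps ^+ 2)%:E / reach A)%E).
Proof.
move=> cA reach0 _ _ _ XA _ _ Xx eps0 _ _ px [npq _] qx.
have eps_qx : eps <= enorm (q - x) by rewrite leNgt; apply/negP.
have pq : p != q by apply/eqP => pq; apply: qx; rewrite -pq.
split; first exact: segment_sphere_crossing.
by move=> y; apply: segment_sphere_dist_bound (XA x Xx) npq pq eps0 eps_qx px.
Qed.
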